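(* For every prime power $q$ there exists a linear $(2,\Phi(q),q)$-AONT, i.e. an invertible $\Phi(q)\times\Phi(q)$ matrix over $\mathbb{F}_q$ all of whose $2\times2$ submatrices are invertible.
   Context: $\Phi$ denotes Euler's totient function, so $\Phi(p^r)=p^r-p^{r-1}$. A linear $(t,s,q)$-AONT over $\mathbb{F}_q$ is given by an invertible $s\times s$ matrix $M$ over $\mathbb{F}_q$ (the transform being $(y_1,\dots,y_s)=(x_1,\dots,x_s)M^{-1}$); $M$ defines a linear $(t,s,q)$-AONT iff every $t\times t$ submatrix of $M$ is invertible. *)

From mathcomp Require Import all_boot all_algebra all_field.
Set Implicit Arguments. Unset Strict Implicit. Unset Printing Implicit Defensive.
Import GRing.Theory.
Local Open Scope ring_scope.

(* Every t x t submatrix of M (choice of t distinct rows and t distinct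
   columns) is invertible. Rows/columns are selected by injective maps;
   reordering rows/columns does not affect invertibility. *)
Definition all_submx_invertible (F : fieldType) (s t : nat) (M : 'M[F]_s) : Prop :=
  forall (f g : 'I_t -> 'I_s), injective f -> injective g ->
    mxsub f g M \in unitmx.

Definition linear_AONT (F : fieldType) (t s : nat) (M : 'M[F]_s) : Prop :=
  M \in unitmx /\ all_submx_invertible t M.

From mathcomp Require Import all_boot all_algebra all_field.
From mathcomp Require Import ring.
Set Implicit Arguments. Unset Strict Implicit. Unset Printing Implicit Defensive.
Import GRing.Theory.
Local Open Scope ring_scope.

(* Let x_0, ..., x_{q-1} enumerate F and let A be the q x q matrix with entries
   (x_i - x_j)^(q-2). For q > 2 this is (x_i - x_j)^-1 (0 on the diagonal), and a
   2 x 2 minor of A on distinct rows a, b and distinct columns c, d is either a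
   single nonzero product or (a - b)(d - c) / ((a - c)(b - d)(a - d)(b - c)).
   Expanding the power binomially gives A = V C, where V has independent columns
   (distinct monomials evaluated at all q points) and row l of C is
   (-1)^l binom(q-2, l) x_j^l. In characteristic p, with q = p^k,
   binom(q-2, l) = (-1)^l (l+1), which vanishes exactly when l+1 is not prime to q;
   hence rank A = rank C >= Phi(q), and any invertible Phi(q) x Phi(q) submatrix
   of A is the required AONT. *)

Lemma prime_dvd_bin_pexp p k i : prime p -> (0 < i < p ^ k)%N -> (p %| 'C(p ^ k, i))%N.
Proof.
move=> p_prime; case: i => [|i] //= lt_i_pk; apply: contraLR lt_i_pk.
rewrite -prime_coprime // -leqNgt => /(coprimeXl k) pk_coprime.
have : (p ^ k %| i.+1 * 'C(p ^ k, i.+1))%N by rewrite -mul_bin_diag dvdn_mulr.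
by rewrite Gauss_dvdl // => /dvdn_leq->.
Qed.

Section BinomialSigns.
Variables (R : comPzRingType) (n : nat).
Hypothesis bin_eq0 : forall i, (0 < i < n.+2)%N -> 'C(n.+2, i)%:R = 0 :> R.

Lemma natr_bin_pred i : (i < n.+2)%N -> 'C(n.+1, i)%:R = (-1) ^+ i :> R.
Proof.
elim: i => [|i IHi] lt_i; first by rewrite bin0.
have /eqP := @bin_eq0 i.+1 lt_i; rewrite binS natrD IHi ?(ltnW lt_i) // addr_eq0.
by move=> /eqP->; rewrite exprS mulN1r.
Qed.

Lemma natr_bin_pred2 j : (j < n.+1)%N -> 'C(n, j)%:R = (-1) ^+ j * j.+1%:R :> R.
Proof.
elim: j => [|j IHj] lt_j; first by rewrite bin0 mul1r.
have := @natr_bin_pred j.+1 (ltnW lt_j); rewrite binS natrD IHj ?(ltnW lt_j) // => E.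
apply: (addIr ((-1) ^+ j * j.+1%:R)); rewrite E exprS -[j.+2%:R]natr1; ring.
Qed.

End BinomialSigns.

Lemma card_coprime_succ n : #|[pred l : 'I_n.+1 | coprime n.+2 l.+1]| = totient n.+2.
Proof.
have coprime0 : coprime n.+2 0 = false by rewrite /coprime gcdn0.
rewrite totient_count_coprime big_ltn // coprime0 big_add1 big_mkord.
by rewrite -sum1_card big_mkcond add0n; apply: eq_bigr => l _; rewrite inE; case: coprime.
Qed.

Lemma det_mx22 (R : comPzRingType) (A : 'M[R]_2) : \det A = A 0 0 * A 1 1 - A 0 1 * A 1 0.
Proof.
rewrite (expand_det_row _ 0) !big_ord_recl big_ord0 /cofactor !det_mx11 !mxE /=.
have -> : lift 0 0 = 1 :> 'I_2 by apply/val_inj.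
have -> : lift 1 0 = 0 :> 'I_2 by apply/val_inj.
rewrite expr0 expr1; ring.
Qed.

Lemma inv_diff_minor_neq0 (F : fieldType) (a b c d : F) : a != b -> c != d ->
  (a - c)^-1 * (b - d)^-1 - (a - d)^-1 * (b - c)^-1 != 0.
Proof.
move=> neq_ab neq_cd.
have inv_sub_neq0 (u v : F) : u != v -> (u - v)^-1 != 0 by rewrite invr_eq0 subr_eq0.
have [ac|neq_ac] := eqVneq a c.
  by subst c; rewrite subrr invr0 mul0r sub0r oppr_eq0 mulf_neq0 ?inv_sub_neq0 // eq_sym.
have [bd|neq_bd] := eqVneq b d.
  by subst d; rewrite subrr invr0 mulr0 sub0r oppr_eq0 mulf_neq0 ?inv_sub_neq0 // eq_sym.
have [ad|neq_ad] := eqVneq a d.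
  by subst d; rewrite subrr invr0 mul0r subr0 mulf_neq0 ?inv_sub_neq0.
have [bc|neq_bc] := eqVneq b c.
  by subst c; rewrite subrr invr0 mulr0 subr0 mulf_neq0 ?inv_sub_neq0.
have -> : (a - c)^-1 * (b - d)^-1 - (a - d)^-1 * (b - c)^-1 =
    (a - b) * (d - c) / ((a - c) * (b - d) * (a - d) * (b - c)).
  by field; rewrite !subr_eq0 neq_ac neq_bd neq_ad neq_bc.
by rewrite !(mulf_neq0, invr_eq0) // subr_eq0 // eq_sym.
Qed.

Lemma expf_card_pred2 (F : finFieldType) (z : F) : (2 < #|F|)%N -> z ^+ #|F|.-2 = z^-1.
Proof.
move=> card_gt2; have [->|z_neq0] := eqVneq z 0.
  by rewrite invr0 expr0n; case: #|F| card_gt2 => [|[|[]]].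
have card_eq : #|F|.-2.+2 = #|F| by case: #|F| card_gt2 => [|[|]].
apply: (mulIf z_neq0); rewrite mulVf // -exprSr.
by apply: (mulIf z_neq0); rewrite mul1r -exprSr card_eq expf_card.
Qed.

Lemma row_free_monomial_mx (F : fieldType) m N (x : 'I_N -> F) (e : 'I_m -> nat)
    (c : 'I_m -> F) :
  injective x -> injective e -> (forall j, e j < N)%N -> (forall j, c j != 0) ->
  row_free (\matrix_(j, i) (c j * x i ^+ e j)).
Proof.
move=> x_inj e_inj lt_e_N c_neq0; apply: inj_row_free => u uM0.
pose P : {poly F} := \sum_(j < m) (u 0 j * c j) *: 'X^(e j).
have P_eq0 : P = 0.
  apply: (@roots_geq_poly_eq0 _ P (codom x)).
  - apply/allP => _ /codomP[i ->]; apply/eqP.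
    have := congr1 (fun v : 'rV_N => v 0 i) uM0; rewrite !mxE => <-.
    by rewrite horner_sum; apply: eq_bigr => j _; rewrite hornerZ hornerXn mxE mulrA.
  - exact/injectiveP.
  rewrite size_codom card_ord (leq_trans (size_sum _ _ _)) //.
  by apply/bigmax_leqP => j _; rewrite (leq_trans (size_scale_leq _ _)) ?size_polyXn.
apply/rowP => j; rewrite mxE; apply/eqP.
have /eqP := congr1 (fun p : {poly F} => p`_(e j)) P_eq0.
rewrite coef0 coef_sum (bigD1 j) //= big1 ?addr0 => [|i neq_ij].
  by rewrite coefZ coefXn eqxx mulr1 mulf_eq0 (negPf (c_neq0 j)) orbF.
by rewrite coefZ coefXn (inj_eq e_inj) eq_sym (negPf neq_ij) mulr0.
Qed.

Lemma row_free_rowsub (F : fieldType) m s n (f : 'I_s -> 'I_m) (A : 'M[F]_(m, n)) :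
  injective f -> row_free A -> row_free (rowsub f A).
Proof.
move=> f_inj A_free; rewrite rowsubE /row_free mxrankMfree //.
apply/row_freeP; exists (rowsub f 1%:M)^T.
by apply/matrixP => i j; rewrite -rowsubE !mxE (inj_eq f_inj) eq_sym.
Qed.

Lemma exists_unitmx_mxsub (F : fieldType) m n s (A : 'M[F]_(m, n)) :
  (s <= \rank A)%N ->
  exists (f : 'I_s -> 'I_m) (g : 'I_s -> 'I_n),
    [/\ injective f, injective g & mxsub f g A \in unitmx].
Proof.
move=> le_s_rk.
have widen_inj : injective (widen_ord le_s_rk) by move=> i j [] /val_inj.
pose f := maxrankfun A \o widen_ord le_s_rk.
have f_inj : injective f := inj_comp (@maxrankfun_inj _ _ _ A) widen_inj.
have fA_free : row_free (rowsub f A).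
  by rewrite rowsub_comp row_free_rowsub ?maxrowsub_free.
have fAt_full : row_full (rowsub f A)^T by rewrite /row_full mxrank_tr.
pose g := fullrankfun fAt_full.
exists f, g; split => //; first exact: fullrankfun_inj.
have -> : mxsub f g A = (rowsub g (rowsub f A)^T)^T by apply/matrixP => i j; rewrite !mxE.
by rewrite unitmx_tr fullrowsub_unit.
Qed.

Section PowDiffMatrix.
Variable F : finFieldType.

Definition pow_diff_mx : 'M[F]_#|F| :=
  \matrix_(i, j) (enum_val i - enum_val j) ^+ #|F|.-2.

Lemma pow_diff_mx_minor2 : (2 < #|F|)%N -> all_submx_invertible 2 pow_diff_mx.
Proof.
move=> card_gt2 f g f_inj g_inj.
rewrite unitmxE unitfE det_mx22 !mxE !expf_card_pred2 //.
by apply: inv_diff_minor_neq0; rewrite (inj_eq enum_val_inj) ?(inj_eq f_inj) ?(inj_eq g_inj).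
Qed.

Section Expansion.
Variable n : nat.
Hypothesis card_F : #|F| = n.+2.

Definition pow_diff_lfactor : 'M[F]_(#|F|, n.+1) := \matrix_(i, l) enum_val i ^+ (n - l).

Definition pow_diff_rfactor : 'M[F]_(n.+1, #|F|) :=
  \matrix_(l, j) ((-1) ^+ l *+ 'C(n, l) * enum_val j ^+ l).

Lemma pow_diff_mx_factor : pow_diff_mx = pow_diff_lfactor *m pow_diff_rfactor.
Proof.
have n_eq : #|F|.-2 = n by rewrite card_F.
apply/matrixP => i j; rewrite !mxE n_eq exprBn; apply: eq_bigr => l _.
by rewrite !mxE mulrnAl mulrnAr; congr (_ *+ _); ring.
Qed.

Lemma row_free_pow_diff_lfactor_tr : row_free pow_diff_lfactor^T.
Proof.
have -> : pow_diff_lfactor^T =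
    \matrix_(l, i) ((fun=> 1) l * enum_val i ^+ (fun l : 'I_n.+1 => (n - l)%N) l).
  by apply/matrixP => l i; rewrite !mxE mul1r.
apply: row_free_monomial_mx => [||l|l]; first exact: enum_val_inj.
- by move=> l1 l2 /= /eqP; rewrite eqn_sub2lE ?(ltnSE (ltn_ord _)) // => /eqP /val_inj.
- by rewrite card_F ltnS leqW ?leq_subr.
- exact: oner_neq0.
Qed.

Variables (p k : nat).
Hypotheses (p_char : p \in [pchar F]) (k_gt0 : (0 < k)%N) (card_pk : #|F| = (p ^ k)%N).

Lemma natr_bin_pred2_eq0 l : (l < n.+1)%N ->
  ('C(n, l)%:R == 0 :> F) = ~~ coprime n.+2 l.+1.
Proof.
have p_prime := pcharf_prime p_char.
have bin_eq0 i : (0 < i < n.+2)%N -> 'C(n.+2, i)%:R = 0 :> F.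
  rewrite -card_F card_pk => /(prime_dvd_bin_pexp p_prime).
  by rewrite (dvdn_pcharf p_char) => /eqP.
move=> lt_l; rewrite natr_bin_pred2 // mulf_eq0 signr_eq0 -(dvdn_pcharf p_char).
by rewrite -card_F card_pk coprime_pexpl // prime_coprime // negbK.
Qed.

Lemma totient_le_rank_pow_diff_rfactor : (totient n.+2 <= \rank pow_diff_rfactor)%N.
Proof.
pose L := [pred l : 'I_n.+1 | coprime n.+2 l.+1].
pose h : 'I_#|L| -> 'I_n.+1 := enum_val.
have h_free : row_free (rowsub h pow_diff_rfactor).
  have -> : rowsub h pow_diff_rfactor = \matrix_(t, j)
      ((fun t => (-1) ^+ h t *+ 'C(n, h t)) t * enum_val j ^+ (fun t => val (h t)) t).
    by apply/matrixP => t j; rewrite !mxE.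
  apply: row_free_monomial_mx => [||t|t]; first exact: enum_val_inj.
  - by move=> t1 t2 /val_inj /enum_val_inj.
  - by rewrite card_F (ltn_trans (ltn_ord _)).
  rewrite -mulr_natr mulf_neq0 ?signr_eq0 // natr_bin_pred2_eq0 // negbK.
  by have := enum_valP t.
rewrite -card_coprime_succ -/L -(eqP h_free); exact/mxrankS/rowsub_sub.
Qed.

End Expansion.

Lemma totient_le_rank_pow_diff_mx p k :
  p \in [pchar F] -> (0 < k)%N -> #|F| = (p ^ k)%N ->
  (totient #|F| <= \rank pow_diff_mx)%N.
Proof.
move=> p_char k_gt0 card_pk.
have [n card_F] : exists n, #|F| = n.+2.
  by have := card_finNzRing_gt1 F; case: #|F| => [|[|n]] //; exists n.
rewrite (pow_diff_mx_factor card_F) -mxrank_tr trmx_mul.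
rewrite mxrankMfree ?row_free_pow_diff_lfactor_tr // mxrank_tr [X in totient X]card_F.
exact: totient_le_rank_pow_diff_rfactor p_char k_gt0 card_pk.
Qed.

End PowDiffMatrix.

Theorem theorem2p19 (F : finFieldType) (p k : nat) :
  prime p -> (0 < k)%N -> #|F| = (p ^ k)%N ->
  exists M : 'M[F]_(totient (p ^ k)), linear_AONT 2 M.
Proof.
move=> p_prime k_gt0 card_pk; rewrite -card_pk.
have p_char := card_finPcharP card_pk p_prime.
have [f [g [f_inj g_inj fg_unit]]] :=
  exists_unitmx_mxsub (totient_le_rank_pow_diff_mx p_char k_gt0 card_pk).
exists (mxsub f g (pow_diff_mx F)); split => // f' g' f'_inj g'_inj.
have card_gt2 : (2 < #|F|)%N.
  by rewrite -totient_gt1; have := leq_card f' f'_inj; rewrite !card_ord.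
by rewrite -mxsub_comp; apply: pow_diff_mx_minor2 => //; apply: inj_comp.
Qed.
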